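(* Let $\mathcal{G}$ be a $p$-periodic graph on a vertex set $V$ with $|V|\ge 2$, and let $\mathcal{D}$ be its arena. If $\mathcal{D}$ is copwin, then $\mathcal{D}$ contains a temporal corner: there exist $t\in\mathbb{Z}_p$ and $u,v\in V$ with $u\neq v$ and $\Gamma_t(u,\mathcal{D})\subseteq\Gamma_{[t+1]_p}(v,\mathcal{D})$.
   Context: Let $V$ be a finite set and $p\ge 1$ an integer; $[t]_p$ denotes $t \bmod p$. A $p$-periodic graph $\mathcal{G}=(G_0,\dots,G_{p-1})^*$ is the infinite sequence of directed graphs $G_t=(V,E_{[t]_p})$, $t=0,1,2,\dots$, where $E_0,\dots,E_{p-1}\subseteq V\times V$ (self-loops allowed). Each $G_i$ is assumed sinkless: every vertex has at least one outgoing edge in $G_i$. An arena on $V$ of length $p$ is a directed graph with vertex set $\mathbb{Z}_p\times V$ (whose elements are called temporal nodes) all of whose edges have the form $((i,w),([i+1]_p,w'))$. The arena of $\mathcal{G}$ is the arena $\mathcal{D}$ with $((i,u),([i+1]_p,v))\in E(\mathcal{D})$ iff $(u,v)\in E_i$. For an arena $\mathcal{M}$, $t\in\mathbb{Z}_p$ and $u\in V$, write $\Gamma_t(u,\mathcal{M})=\{v\in V : ((t,u),([t+1]_p,v))\in E(\mathcal{M})\}$. The (one-cop, restless) game on $\mathcal{G}$: first the cop chooses a vertex, then the robber chooses a vertex. In each round $t=0,1,2,\dots$, with the cop at $c$ and the robber at $r$, the cop must move to some $c'\in\Gamma_{[t]_p}(c,\mathcal{D})$; if $c'=r$ the cop wins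 and the game ends; otherwise the robber must move to some $r'\in\Gamma_{[t]_p}(r,\mathcal{D})$, and round $t+1$ starts with the cop at $c'$ and the robber at $r'$. Both players have full information. A configuration $(t,c,r)$ with $t\in\mathbb{Z}_p$, $c,r\in V$ is the state at the start of a round whose index is congruent to $t$ mod $p$, with the cop at $c$ and the robber at $r$, cop to move; it is copwin if, starting from it, the cop has a strategy that captures the robber after finitely many rounds against every robber strategy. $\mathcal{D}$ (equivalently $\mathcal{G}$) is copwin if there is $c\in V$ such that $(0,c,r)$ is copwin for every $r\in V$. *)

From mathcomp Require Import all_boot.
Set Implicit Arguments. Unset Strict Implicit. Unset Printing Implicit Defensive.

(* Time indices Z_p are represented by 'I_p (p >= 1); [t+1]_p is ordS t. *)

Definition sinkless (V : finType) (p : nat) (E : 'I_p -> rel V) : Prop :=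
  forall (t : 'I_p) (u : V), exists v : V, E t u v.

Definition is_arena (V : finType) (p : nat) (M : rel ('I_p * V)) : Prop :=
  forall x y, M x y -> y.1 = ordS x.1.

Definition arena_of (V : finType) (p : nat) (E : 'I_p -> rel V)
  : rel ('I_p * V) :=
  fun x y => (y.1 == ordS x.1) && E x.1 x.2 y.2.

Definition Gamma (V : finType) (p : nat) (M : rel ('I_p * V)) (t : 'I_p) (u : V)
  : {set V} := [set v | M (t, u) (ordS t, v)].

(* Copwin configurations (t, c, r): the cop, to move, can force capture in
   finitely many rounds (least fixpoint / attractor of capture). *)
Inductive copwin_conf (V : finType) (p : nat) (M : rel ('I_p * V))
  : 'I_p -> V -> V -> Prop :=
| cw_capture (t : 'I_p) (c r : V) :
    r \in Gamma M t c -> copwin_conf M t c r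
| cw_step (t : 'I_p) (c r c' : V) :
    c' \in Gamma M t c -> c' != r ->
    (forall r', r' \in Gamma M t r -> copwin_conf M (ordS t) c' r') ->
    copwin_conf M t c r.

Definition copwin (V : finType) (p : nat) (hp : 0 < p) (M : rel ('I_p * V)) : Prop :=
  exists c : V, forall r : V, copwin_conf M (Ordinal hp) c r.

Definition has_temporal_corner (V : finType) (p : nat) (M : rel ('I_p * V)) : Prop :=
  exists (t : 'I_p) (u v : V), u != v /\ Gamma M t u \subset Gamma M (ordS t) v.

From mathcomp Require Import all_boot.

Set Implicit Arguments. Unset Strict Implicit. Unset Printing Implicit Defensive.

(* A cop win that does not capture at once passes through a move c -> c'
   (c' <> r) after which every robber answer r' is again cop-winning; if
   moreover every such answer is captured immediately, then
   Gamma_t(r) <= Gamma_(t+1)(c') is a temporal corner.  Hence, in an arena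
   without corners, a winning cop placed at c must catch every robber in the
   first round, so c is adjacent to all of V at time 0, and any u <> c yields
   the corner Gamma_(p-1)(u) <= V = Gamma_0(c). *)

Lemma copwin_conf_capture_or_corner (V : finType) (p : nat)
    (M : rel ('I_p * V)) (t : 'I_p) (c r : V) :
  copwin_conf M t c r -> r \in Gamma M t c \/ has_temporal_corner M.
Proof.
elim=> {t c r} [t c r capture | t c r c' _ c'_neq_r _ IH]; [by left | right].
have [dominated | /subsetPn [r' r_to_r' c'_misses_r']] :=
  boolP (Gamma M t r \subset Gamma M (ordS t) c').
  by exists t, r, c'; rewrite eq_sym.
by case: (IH r' r_to_r'); first by rewrite (negbTE c'_misses_r').
Qed.

Lemma dominating_temporal_corner (V : finType) (p : nat)
    (M : rel ('I_p * V)) (t : 'I_p) (c u : V) :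
  [set: V] \subset Gamma M (ordS t) c -> u != c -> has_temporal_corner M.
Proof.
by move=> c_dominates u_neq_c; exists t, u, c; rewrite (subset_trans (subsetT _)).
Qed.

Lemma exists_other_vertex (V : finType) (c : V) :
  1 < #|V| -> exists u : V, u != c.
Proof.
case/card_gt1P=> x [y [_ _ x_neq_y]].
by case: (eqVneq x c) => [x_eq_c | ]; [exists y; rewrite -x_eq_c eq_sym | exists x].
Qed.

Theorem mainTheorem1 (V : finType) (p : nat) (hp : 0 < p) (E : 'I_p -> rel V) :
  sinkless E -> 1 < #|V| ->
  copwin hp (arena_of E) -> has_temporal_corner (arena_of E).
Proof.
move=> _ two_vertices [c c_wins].
have [u u_neq_c] := exists_other_vertex c two_vertices.
have [c_dominates | /subsetPn [r _ r_escapes]] :=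
  boolP ([set: V] \subset Gamma (arena_of E) (Ordinal hp) c).
  apply: (@dominating_temporal_corner _ _ _ (ord_pred (Ordinal hp)) c u) => //.
  by rewrite ord_predK.
by case: (copwin_conf_capture_or_corner (c_wins r)); first by rewrite (negbTE r_escapes).
Qed.
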